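(* Let $\lambda\ge\Delta^{-1/2}$. For every $(p,g)\in\mathcal Z$, \[ \mu_{\min}\,\ell^\Theta_{\mathrm C,\infty}\bigl(p,\mathcal G(p)\bigr)\le d_\lambda\Bigl((p,g),\bigl(h^{(g)}_\mu(p),\bar r^\pi\bigr)\Bigr) \quad\text{and}\quad |g-\bar r^\pi|\le\lambda^{-1}d_\lambda\Bigl((p,g),\bigl(h^{(g)}_\mu(p),\bar r^\pi\bigr)\Bigr), \] where $\mu_{\min}:=\min_i\mu_i$.
   Context: Finite MDP with state set $\mathcal{S}=\{1,\dots,m\}$, finite action set, deterministic rewards in $[0,1]$, fixed policy inducing a transition matrix $P=(P_{ij})$ on $\mathcal S$ that is irreducible and aperiodic with stationary distribution $\mu$. $R_{ij}$ is the finite-valued $[0,1]$-valued random one-step reward conditioned on transition $i\to j$; gain $\bar r^\pi=\sum_i\mu_i\sum_jP_{ij}\mathbb E[R_{ij}]$; $\nu^{(g)}_{ij}:=\mathrm{Law}(R_{ij}-g)$. $\Theta=\{\theta_1<\dots<\theta_d\}$ with constant stride $\Delta>0$; $\Delta_d$ the probability simplex of $\mathbb R^d$; $\Delta_d^{\mathcal S}$ families $(p_i)_{i\in\mathcal S}$, $p_i\in\Delta_d$; $\mathcal Z:=\Delta_d^{\mathcal S}\times[0,1]$. For $u\in\Delta_d$, $\eta^{u,0}:=\sum_ku_k\delta_{\theta_k}$. Categorical projection $\Pi^\Theta_{\mathrm C}$: $\delta_x\mapsto\delta_{\theta_1}$ if $x\le\theta_1$, $\delta_{\theta_d}$ if $x\ge\theta_d$,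 $\frac{\theta_{k+1}-x}{\Delta}\delta_{\theta_k}+\frac{x-\theta_k}{\Delta}\delta_{\theta_{k+1}}$ if $\theta_k\le x\le\theta_{k+1}$, extended linearly to laws. $\mathcal G_g(p)$ is the unique $q\in\Delta_d^{\mathcal S}$ with $\eta^{q_i,0}=\Pi^\Theta_{\mathrm C}(\sum_jP_{ij}(\nu^{(g)}_{ij}\ast\eta^{p_j,0}))$ for all $i$; $\mathcal G:=\mathcal G_{\bar r^\pi}$. $h^{(g)}_\mu(p)_i:=(1-\mu_i)p_i+\mu_i\mathcal G_g(p)_i$. Coordinate Cramér metric: $F_u(\theta_k):=\sum_{j\le k}u_j$, $\ell^\Theta_{\mathrm C}(u,v)^2:=\Delta\sum_{k=1}^{d-1}(F_u(\theta_k)-F_v(\theta_k))^2$, $\ell^\Theta_{\mathrm C,\infty}(p,q):=\max_i\ell^\Theta_{\mathrm C}(p_i,q_i)$; $d_\lambda((p,g),(q,g')):=\ell^\Theta_{\mathrm C,\infty}(p,q)+\lambda|g-g'|$. *)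

From HB Require Import structures.
From mathcomp Require Import all_boot all_order all_algebra.
From mathcomp Require Import reals.
Set Implicit Arguments. Unset Strict Implicit. Unset Printing Implicit Defensive.
Import Order.TTheory GRing.Theory Num.Theory.
Local Open Scope ring_scope.

Section Defs.
Variable R : realType.

Definition mpow (m : nat) (P : 'I_m -> 'I_m -> R) (n : nat) : 'I_m -> 'I_m -> R :=
  iter n (fun Q i j => \sum_(k < m) Q i k * P k j)
         (fun i j => (i == j)%:R).

Definition stochastic (m : nat) (P : 'I_m -> 'I_m -> R) : Prop :=
  (forall i j, 0 <= P i j) /\ (forall i, \sum_(j < m) P i j = 1).

Definition irreducible (m : nat) (P : 'I_m -> 'I_m -> R) : Prop :=
  forall i j, exists n, 0 < mpow P n i j.

Definition aperiodic (m : nat) (P : 'I_m -> 'I_m -> R) : Prop :=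
  forall i (k : nat), (forall n, 0 < mpow P n i i -> (k %| n)%N) -> k = 1%N.

Definition distribution (T : finType) (u : T -> R) : Prop :=
  (forall k, 0 <= u k) /\ \sum_(k : T) u k = 1.

Definition stationary (m : nat) (P : 'I_m -> 'I_m -> R) (mu : 'I_m -> R) : Prop :=
  distribution mu /\ forall j, \sum_(i < m) mu i * P i j = mu j.

(* ---------- finite-valued rewards ----------
   The law of R_ij is sum_w pr i j w * delta_(rv i j w), w ranging over a finite type. *)
Definition reward_laws (m : nat) (Om : finType)
  (rv pr : 'I_m -> 'I_m -> Om -> R) : Prop :=
  (forall i j w, 0 <= rv i j w <= 1) /\ (forall i j, distribution (pr i j)) .

Definition exp_reward (m : nat) (Om : finType) (rv pr : 'I_m -> 'I_m -> Om -> R)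
  (i j : 'I_m) : R := \sum_(w : Om) pr i j w * rv i j w.

Definition gain (m : nat) (Om : finType) (P : 'I_m -> 'I_m -> R) (mu : 'I_m -> R)
  (rv pr : 'I_m -> 'I_m -> Om -> R) : R :=
  \sum_(i < m) mu i * \sum_(j < m) P i j * exp_reward rv pr i j.

(* 0-indexed: theta k = th1 + k * Del, k : 'I_d *)
Definition theta (th1 Del : R) (d : nat) (k : 'I_d) : R := th1 + k%:R * Del.
Definition theta_last (th1 Del : R) (d : nat) : R := th1 + (d.-1)%:R * Del.

(* Categorical projection of delta_x: the weight it puts on theta_k.
   x <= theta_1 -> delta_theta_1 ; x >= theta_d -> delta_theta_d ;
   theta_k <= x <= theta_(k+1) -> (theta_(k+1)-x)/Del on theta_k and
   (x-theta_k)/Del on theta_(k+1), written as the hat function. *)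
Definition catproj_dirac (th1 Del : R) (d : nat) (x : R) (k : 'I_d) : R :=
  if x <= th1 then ((k : nat) == 0%N)%:R
  else if theta_last th1 Del d <= x then ((k : nat) == d.-1)%:R
  else Num.max 0 (1 - `|x - theta th1 Del k| / Del).

(* G_g(p)_i: coordinates of Pi_C( sum_j P_ij (nu^(g)_ij * eta^{p_j,0}) ).
   nu^(g)_ij * eta^{p_j,0} = sum_w sum_l pr_ij(w) p_j(l) delta_(rv_ij(w) - g + theta_l),
   and Pi_C is extended linearly. *)
Definition Gop (m d : nat) (Om : finType) (th1 Del : R) (P : 'I_m -> 'I_m -> R)
  (rv pr : 'I_m -> 'I_m -> Om -> R) (g : R) (p : 'I_m -> 'I_d -> R) :
  'I_m -> 'I_d -> R :=
  fun i k => \sum_(j < m) P i j *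
     \sum_(w : Om) pr i j w *
       \sum_(l < d) p j l * catproj_dirac th1 Del (rv i j w - g + theta th1 Del l) k.

Definition hop (m d : nat) (Om : finType) (th1 Del : R) (P : 'I_m -> 'I_m -> R)
  (rv pr : 'I_m -> 'I_m -> Om -> R) (mu : 'I_m -> R) (g : R) (p : 'I_m -> 'I_d -> R) :
  'I_m -> 'I_d -> R :=
  fun i k => (1 - mu i) * p i k + mu i * Gop th1 Del P rv pr g p i k.

Definition cdf (d : nat) (u : 'I_d -> R) (k : 'I_d) : R :=
  \sum_(j < d | (j <= k)%N) u j.

Definition cramer (Del : R) (d : nat) (u v : 'I_d -> R) : R :=
  Num.sqrt (Del * \sum_(k < d | (k < d.-1)%N) (cdf u k - cdf v k) ^+ 2).

Definition cramer_inf (Del : R) (m d : nat) (p q : 'I_m -> 'I_d -> R) : R :=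
  \big[Num.max/0]_(i < m) cramer Del (p i) (q i).

Definition d_lambda (Del lam : R) (m d : nat)
  (pg qg' : ('I_m -> 'I_d -> R) * R) : R :=
  cramer_inf Del pg.1 qg'.1 + lam * `|pg.2 - qg'.2|.

(* min_i mu_i (mu takes values in [0,1], so 1 is a neutral default) *)
Definition mu_min (m : nat) (mu : 'I_m -> R) : R := \big[Num.min/1]_(i < m) mu i.

End Defs.

(* The cdf is linear, so F(h_i) - F(p_i) = mu_i (F(G_g(p)_i) - F(p_i)), and the
   Cramér distance is sqrt Del times the Euclidean norm of the cdf difference on
   the first d-1 atoms.  Minkowski's inequality therefore gives
     mu_i l(p_i, G_r(p)_i) <= l(p_i, h_i) + mu_i l(G_g(p)_i, G_r(p)_i).
   The k-th cdf value of the projected Dirac at x is clamp01(k+1 - (x - th1)/Del),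
   so moving x by c moves the whole cdf by at most |c|/Del in l1; G is a mixture
   of such projections, whence l(G_g(p)_i, G_r(p)_i) <= |g - r|/sqrt Del
   <= lam |g - r|. *)

From HB Require Import structures.
From mathcomp Require Import all_boot all_order all_algebra.
From mathcomp Require Import reals.
From mathcomp Require Import lra zify ring.
Set Implicit Arguments.
Unset Strict Implicit.
Unset Printing Implicit Defensive.
Import Order.TTheory GRing.Theory Num.Theory.
Local Open Scope ring_scope.

Ltac case_minmax :=
  repeat match goal with
  | |- context [Num.max ?a ?b] => case: (lerP a b)
  | |- context [Num.min ?a ?b] => case: (lerP a b)
  | |- context [`|?x|] =>
      let hx := fresh "hx" in
      have [hx|hx] := lerP 0 x; [rewrite (ger0_norm hx) | rewrite (ltr0_norm hx)];
      move: hx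
  end; intros.

Section Clamp.
Variable R : realFieldType.

Definition clamp01 (t : R) : R := Num.min 1 (Num.max 0 t).

Lemma sum_clamp01_shift n (t : R) :
  \sum_(k < n) clamp01 (k.+1%:R - t) = Num.min n%:R (Num.max 0 (n%:R - t)).
Proof.
elim: n => [|n IH]; first by rewrite big_ord0; case_minmax; lra.
have n_ge0 : (0 : R) <= n%:R by rewrite ler0n.
by rewrite big_ord_recr /= IH /clamp01 -natr1; case_minmax; lra.
Qed.

Lemma sum_dist_clamp01_shift n (u v : R) :
  \sum_(k < n) `|clamp01 (k.+1%:R - u) - clamp01 (k.+1%:R - v)| <= `|u - v|.
Proof.
wlog le_uv : u v / u <= v.
  move=> H; have [/H //|/ltW/H] := leP u v.
  by rewrite distrC; under eq_bigr do rewrite distrC.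
have n_ge0 : (0 : R) <= n%:R by rewrite ler0n.
rewrite (eq_bigr (fun k : 'I_n => clamp01 (k.+1%:R - u) - clamp01 (k.+1%:R - v)))
  => [|k _]; last by rewrite ger0_norm // subr_ge0 /clamp01; case_minmax; lra.
by rewrite sumrB !sum_clamp01_shift; case_minmax; lra.
Qed.

Lemma sum_hat_clamp01 n (u : R) : 0 < u ->
  \sum_(j < n.+1) Num.max 0 (1 - `|u - j%:R|) = clamp01 (n.+1%:R - u).
Proof.
move=> u_gt0; elim: n => [|n IH].
  by rewrite big_ord_recr big_ord0 /= add0r /clamp01; case_minmax; lra.
have n_ge0 : (0 : R) <= n%:R by rewrite ler0n.
rewrite big_ord_recr /= IH /clamp01 -[n.+2]addn1 -[n.+1]addn1 !natrD.
by case_minmax; lra.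
Qed.

End Clamp.

Section L2Norm.
Variables (R : rcfType) (I : finType) (P : pred I).

Definition l2norm (a : I -> R) : R := Num.sqrt (\sum_(i | P i) a i ^+ 2).

Let sum_sqr_ge0 (a : I -> R) : 0 <= \sum_(i | P i) a i ^+ 2.
Proof. by apply: sumr_ge0 => i _; apply: sqr_ge0. Qed.

Lemma eq_l2norm (a b : I -> R) :
  (forall i, P i -> a i = b i) -> l2norm a = l2norm b.
Proof.
by move=> eq_ab; rewrite /l2norm; congr Num.sqrt; apply: eq_bigr => i /eq_ab ->.
Qed.

Lemma l2normZ (c : R) (a : I -> R) : 0 <= c ->
  l2norm (fun i => c * a i) = c * l2norm a.
Proof.
move=> c_ge0; rewrite /l2norm -{2}(ger0_norm c_ge0) -sqrtr_sqr -sqrtrM ?sqr_ge0 //.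
by rewrite mulr_sumr; under eq_bigr do rewrite exprMn.
Qed.

Lemma CauchySchwarz_sum (a b : I -> R) :
  (\sum_(i | P i) a i * b i) ^+ 2 <=
  (\sum_(i | P i) a i ^+ 2) * (\sum_(i | P i) b i ^+ 2).
Proof.
set A := \sum_(i | P i) a i ^+ 2; set B := \sum_(i | P i) b i ^+ 2.
set C := \sum_(i | P i) a i * b i.
have [B0|B_neq0] := eqVneq B 0.
  have b0 i : P i -> b i = 0.
    move=> Pi; apply/eqP; rewrite -sqrf_eq0.
    exact/eqP/(psumr_eq0P (fun i _ => sqr_ge0 (b i)) B0).
  by rewrite /C big1 ?B0 ?expr0n ?mulr0 // => i Pi; rewrite b0 ?mulr0.
have B_gt0 : 0 < B by rewrite lt_def B_neq0 sum_sqr_ge0.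
suff : 0 <= B * (A * B - C ^+ 2) by rewrite pmulr_rge0 // subr_ge0.
have -> : B * (A * B - C ^+ 2) = \sum_(i | P i) (B * a i - C * b i) ^+ 2.
  rewrite (eq_bigr (fun i => B ^+ 2 * a i ^+ 2 - (2 * B * C) * (a i * b i)
                             + C ^+ 2 * b i ^+ 2)) => [|i _]; last by ring.
  by rewrite big_split sumrB /= -!mulr_sumr -/A -/B -/C; ring.
exact: sum_sqr_ge0.
Qed.

Lemma ler_sum_mul_l2norm (a b : I -> R) :
  \sum_(i | P i) a i * b i <= l2norm a * l2norm b.
Proof.
rewrite /l2norm -sqrtrM // (le_trans (ler_norm _)) // -sqrtr_sqr.
exact/ler_wsqrtr/CauchySchwarz_sum.
Qed.

Lemma l2normD (a b : I -> R) :
  l2norm (fun i => a i + b i) <= l2norm a + l2norm b.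
Proof.
have := ler_sum_mul_l2norm a b; rewrite /l2norm => cs.
rewrite -[X in _ <= X]ger0_norm ?addr_ge0 ?sqrtr_ge0 // -sqrtr_sqr.
rewrite ler_wsqrtr // sqrrD !sqr_sqrtr //.
under eq_bigr do rewrite sqrrD.
by rewrite !big_split /= -mulr_natr; lra.
Qed.

Lemma l2norm_le_sum_norm (a : I -> R) : l2norm a <= \sum_(i | P i) `|a i|.
Proof.
rewrite /l2norm -[X in _ <= X]ger0_norm ?sumr_ge0 // -sqrtr_sqr ler_wsqrtr //.
rewrite expr2 mulr_suml; apply: ler_sum => i Pi.
by rewrite -real_normK ?num_real // expr2 ler_wpM2l // (bigD1 i) //= lerDl sumr_ge0.
Qed.

End L2Norm.

Lemma sum_dist_convex (R : numDomainType) (I J : finType) (P : pred I)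
    (c : J -> R) (f g : J -> I -> R) (b : R) :
  (forall j, 0 <= c j) -> \sum_j c j = 1 ->
  (forall j, \sum_(i | P i) `|f j i - g j i| <= b) ->
  \sum_(i | P i) `|\sum_j c j * f j i - \sum_j c j * g j i| <= b.
Proof.
move=> c_ge0 c_sum1 fg_le.
apply: (@le_trans _ _ (\sum_(i | P i) \sum_j c j * `|f j i - g j i|)).
  apply: ler_sum => i _; rewrite -sumrB (le_trans (ler_norm_sum _ _ _)) //.
  by apply: ler_sum => j _; rewrite -mulrBr normrM ger0_norm.
rewrite exchange_big /= -[b]mul1r -c_sum1 mulr_suml.
by apply: ler_sum => j _; rewrite -mulr_sumr ler_wpM2l.
Qed.

Section CategoricalCramer.
Variables (R : realType) (th1 Del : R) (d : nat).
Hypothesis Del_gt0 : 0 < Del.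

Lemma cdf_catproj_dirac x (k : 'I_d) : (k < d.-1)%N ->
  cdf (catproj_dirac th1 Del x) k = clamp01 (k.+1%:R - (x - th1) / Del).
Proof.
move=> lt_k_d1.
have le_k1_d : (k.+1 <= d)%N by have := ltn_ord k; lia.
set F := fun j : nat => if x <= th1 then (j == 0%N)%:R
  else if theta_last th1 Del d <= x then (j == d.-1)%:R
  else Num.max 0 (1 - `|x - (th1 + j%:R * Del)| / Del).
have -> : cdf (catproj_dirac th1 Del x) k = \sum_(j < k.+1) F j.
  by rewrite (big_ord_widen d F le_k1_d).
rewrite /F /theta_last; set u := (x - th1) / Del.
have x_eq : x = th1 + u * Del by rewrite /u mulfVK ?gt_eqF //; lra.
have k1_le : (k.+1%:R : R) <= (d.-1)%:R by rewrite ler_nat.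
have k1_ge1 : (1 : R) <= k.+1%:R by rewrite ler1n.
have [x_le|x_gt] := boolP (x <= th1).
  rewrite big_ord_recl /= big1 ?addr0; last by move=> j _.
  have : u <= 0 by rewrite -(pmulr_lle0 _ Del_gt0); lra.
  by rewrite /clamp01; case_minmax; lra.
have [x_ge|x_lt] := boolP (th1 + (d.-1)%:R * Del <= x).
  rewrite big1 => [|j _]; last by case: eqP => // j_eq; have := ltn_ord j; lia.
  have : (d.-1)%:R <= u by rewrite -subr_ge0 -(pmulr_lge0 _ Del_gt0); lra.
  by rewrite /clamp01; case_minmax; lra.
have u_gt0 : 0 < u by rewrite -(pmulr_lgt0 _ Del_gt0); move: x_gt; rewrite -ltNge; lra.
rewrite -sum_hat_clamp01 //; apply: eq_bigr => j _.
have -> : x - (th1 + j%:R * Del) = (u - j%:R) * Del by rewrite {1}x_eq; ring.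
by rewrite normrM (gtr0_norm Del_gt0) mulfK ?gt_eqF.
Qed.

Lemma sum_dist_cdf_catproj_dirac x y :
  \sum_(k < d | (k < d.-1)%N)
     `|cdf (catproj_dirac th1 Del x) k - cdf (catproj_dirac th1 Del y) k|
  <= `|x - y| / Del.
Proof.
pose u := (x - th1) / Del; pose v := (y - th1) / Del.
pose D (k : nat) : R := `|clamp01 (k.+1%:R - u) - clamp01 (k.+1%:R - v)|.
rewrite (eq_bigr (fun k : 'I_d => D k)) => [|k lt_k_d1]; last first.
  by rewrite !cdf_catproj_dirac.
rewrite -(big_ord_widen d D) ?leq_pred //.
apply: le_trans (sum_dist_clamp01_shift _ _ _) _.
by rewrite /u /v -mulrBl opprB addrA subrK normrM normfV (gtr0_norm Del_gt0).
Qed.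

Lemma cdf_sum (J : finType) (c : J -> R) (u : J -> 'I_d -> R) k :
  cdf (fun k => \sum_j c j * u j k) k = \sum_j c j * cdf (u j) k.
Proof. by rewrite /cdf exchange_big; apply: eq_bigr => j _; rewrite mulr_sumr. Qed.

Lemma cdf_Gop m (Om : finType) (P : 'I_m -> 'I_m -> R) rv pr g p i k :
  cdf (@Gop _ m d Om th1 Del P rv pr g p i) k =
  \sum_j P i j * \sum_w pr i j w * \sum_l p j l *
    cdf (catproj_dirac th1 Del (rv i j w - g + theta th1 Del l)) k.
Proof.
rewrite /Gop cdf_sum; apply: eq_bigr => j _; rewrite cdf_sum.
by congr (_ * _); apply: eq_bigr => w _; rewrite cdf_sum.
Qed.

Lemma sum_dist_cdf_Gop m (Om : finType) (P : 'I_m -> 'I_m -> R)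
    (rv pr : 'I_m -> 'I_m -> Om -> R) (p : 'I_m -> 'I_d -> R) g r i :
  (forall j, 0 <= P i j) -> \sum_j P i j = 1 ->
  (forall j, distribution (pr i j)) -> (forall j, distribution (p j)) ->
  \sum_(k < d | (k < d.-1)%N)
     `|cdf (Gop th1 Del P rv pr g p i) k - cdf (Gop th1 Del P rv pr r p i) k|
  <= `|g - r| / Del.
Proof.
move=> P_ge0 P_sum1 pr_distr p_distr.
under eq_bigr do rewrite !cdf_Gop.
apply: sum_dist_convex => // j; have [pr_ge0 pr_sum1] := pr_distr j.
apply: sum_dist_convex => // w; have [p_ge0 p_sum1] := p_distr j.
apply: sum_dist_convex => // l.
set a := rv i j w; set t := theta th1 Del l.
suff -> : `|g - r| = `|(a - g + t) - (a - r + t)|.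
  exact: sum_dist_cdf_catproj_dirac.
by rewrite distrC; congr `|_|; ring.
Qed.

Lemma cramerE (u v : 'I_d -> R) :
  cramer Del u v =
  Num.sqrt Del * l2norm (fun k : 'I_d => (k < d.-1)%N) (fun k => cdf u k - cdf v k).
Proof. by rewrite /cramer sqrtrM // ltW. Qed.

Lemma cramer_Gop_shift m (Om : finType) (P : 'I_m -> 'I_m -> R)
    (rv pr : 'I_m -> 'I_m -> Om -> R) (p : 'I_m -> 'I_d -> R) g r i :
  (forall j, 0 <= P i j) -> \sum_j P i j = 1 ->
  (forall j, distribution (pr i j)) -> (forall j, distribution (p j)) ->
  cramer Del (Gop th1 Del P rv pr g p i) (Gop th1 Del P rv pr r p i)
  <= `|g - r| / Num.sqrt Del.
Proof.
move=> P_ge0 P_sum1 pr_distr p_distr.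
have sum_le := sum_dist_cdf_Gop rv g r P_ge0 P_sum1 pr_distr p_distr.
rewrite cramerE; apply: le_trans (ler_wpM2l (sqrtr_ge0 _) (l2norm_le_sum_norm _ _)) _.
apply: le_trans (ler_wpM2l (sqrtr_ge0 _) sum_le) _.
have sqrt_Del_gt0 : 0 < Num.sqrt Del by rewrite sqrtr_gt0.
suff -> : Num.sqrt Del * (`|g - r| / Del) = `|g - r| / Num.sqrt Del by [].
by rewrite -{2}(sqr_sqrtr (ltW Del_gt0)) expr2 invfM; field; rewrite gt_eqF.
Qed.

Lemma cramer_convex_le (a : R) (u v w : 'I_d -> R) : 0 <= a ->
  a * cramer Del u v <=
  cramer Del u (fun k => (1 - a) * u k + a * w k) + a * cramer Del w v.
Proof.
move=> a_ge0; rewrite !cramerE mulrCA [X in _ <= _ + X]mulrCA.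
rewrite -!(@l2normZ _ _ _ a) // -mulrDr.
apply: ler_wpM2l; first exact: sqrtr_ge0.
apply: le_trans (l2normD _ _ _); rewrite le_eqVlt; apply/orP; left; apply/eqP.
apply: eq_l2norm => k _.
have cdf_comb :
    cdf (fun k => (1 - a) * u k + a * w k) k = (1 - a) * cdf u k + a * cdf w k.
  by rewrite /cdf big_split /= -!mulr_sumr.
by rewrite cdf_comb; ring.
Qed.

End CategoricalCramer.

Theorem corollary3 (R : realType) (m d : nat) (Om : finType)
  (P : 'I_m -> 'I_m -> R) (mu : 'I_m -> R)
  (rv pr : 'I_m -> 'I_m -> Om -> R) (th1 Del lam : R) :
  stochastic P -> irreducible P -> aperiodic P -> stationary P mu ->
  reward_laws rv pr ->
  0 < Del ->
  (Num.sqrt Del)^-1 <= lam ->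
  forall (p : 'I_m -> 'I_d -> R) (g : R),
    (forall i, distribution (p i)) -> 0 <= g <= 1 ->
    let rbar := gain P mu rv pr in
    let D := d_lambda Del lam (p, g) (hop th1 Del P rv pr mu g p, rbar) in
    mu_min mu * cramer_inf Del p (Gop th1 Del P rv pr rbar p) <= D /\
    `|g - rbar| <= lam^-1 * D.
Proof.
move=> [P_ge0 P_sum1] _ _ [[mu_ge0 mu_sum1] _] [_ pr_distr] Del_gt0 lam_ge p g
  p_distr _ rbar D.
have lam_gt0 : 0 < lam by apply: lt_le_trans lam_ge; rewrite invr_gt0 sqrtr_gt0.
set C := cramer_inf Del p (hop th1 Del P rv pr mu g p).
have C_ge0 : 0 <= C := bigmax_ge_id _ _ _ _.
rewrite /D /d_lambda /= -/C; split; last first.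
  by rewrite mulrDr mulrA mulVf ?gt_eqF // mul1r lerDr mulr_ge0 // invr_ge0 ltW.
have cramer_Gop_le i :
    mu_min mu * cramer Del (p i) (Gop th1 Del P rv pr rbar p i) <= C + lam * `|g - rbar|.
  have mu_le1 : mu i <= 1 by rewrite -mu_sum1 (bigD1 i) //= lerDl sumr_ge0.
  apply: le_trans (ler_wpM2r (sqrtr_ge0 _) (bigmin_le _ i _)) _.
  have := cramer_convex_le Del_gt0 (p i) (Gop th1 Del P rv pr rbar p i)
    (Gop th1 Del P rv pr g p i) (mu_ge0 i).
  move/le_trans; apply; apply: lerD.
    exact: (le_bigmax _ (fun j => cramer Del (p j) (hop th1 Del P rv pr mu g p j))).
  apply: le_trans (ler_wpM2l (mu_ge0 i)
    (cramer_Gop_shift th1 Del_gt0 rv g rbar (P_ge0 i) (P_sum1 i) (pr_distr i) p_distr)) _.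
  by rewrite -[X in _ <= X]mul1r ler_pM ?divr_ge0 ?sqrtr_ge0 // mulrC ler_wpM2r.
apply: (big_ind (fun y => mu_min mu * y <= C + lam * `|g - rbar|)) => [|x y|i _].
- by rewrite mulr0 addr_ge0 // mulr_ge0 // ltW.
- by move=> hx hy; case: (leP x y).
- exact: cramer_Gop_le.
Qed.
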